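(* For every $x\in\Gamma^\circ$ and $i\in\{0,1\}$, the map $(s,t)\mapsto\Psi_i^{(s,t)}(x)$ is a diffeomorphism from $R_i(x)$ onto its image $\Psi_i^{R_i(x)}(x)$, and from $L_i(x)$ onto its image $\Psi_i^{L_i(x)}(x)$.
   Context: Fix $\alpha>\beta>0$. For $i\in\{0,1\}$ let $\Phi_i^t(x_1,x_2)=(i+(x_1-i)e^{-\alpha t},\, i+(x_2-i)e^{-\beta t})$ ($t\in\mathbb{R}$) and $\Psi_i^t=\Phi_i^{-t}$. For $s,t>0$ set $\Psi_i^{(s,t)}=(\Phi_i^t\circ\Phi_{1-i}^s)^{-1}=\Psi_{1-i}^s\circ\Psi_i^t$. Let $\Gamma=\{(x_1,x_2): 0\le x_2\le1,\ x_2^{\alpha/\beta}\le x_1\le 1-(1-x_2)^{\alpha/\beta}\}$, $\Gamma^\circ$ its interior, $\Gamma_r=\{x\in\Gamma^\circ: x_1>x_2\}$, $\Gamma_l=\{x\in\Gamma^\circ:x_1<x_2\}$. For $x\in\Gamma^\circ$ let $T_i^2(x)=\{(s,t)\in(0,\infty)^2:\Psi_i^{(s,t)}(x)\in\Gamma^\circ\}$, $R_i(x)=\{(s,t)\in T_i^2(x):\Psi_i^t(x)\in\Gamma_r\}$ and $L_i(x)=\{(s,t)\in T_i^2(x):\Psi_i^t(x)\in\Gamma_l\}$; $\Psi_i^{A}(x)$ denotes $\{\Psi_i^{(s,t)}(x):(s,t)\in A\}$. *)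

From HB Require Import structures.
From mathcomp Require Import all_boot all_order all_algebra.
From mathcomp Require Import all_classical all_reals all_analysis.
Set Implicit Arguments. Unset Strict Implicit. Unset Printing Implicit Defensive.
Import Order.TTheory GRing.Theory Num.Theory.
Import numFieldNormedType.Exports.
Local Open Scope classical_set_scope.
Local Open Scope ring_scope.

Section Defs.
Variable R : realType.
Implicit Types (a b : R) (x : R * R) (i : bool).

Definition vtx i : R := (i : nat)%:R.

(* Psi_i^t = Phi_i^{-t} *)
Definition Psi a b i (t : R) x : R * R :=
  (vtx i + (x.1 - vtx i) * expR (a * t), vtx i + (x.2 - vtx i) * expR (b * t)).

Definition Psi2 a b i (s t : R) x : R * R := Psi a b (~~ i) s (Psi a b i t x).

Definition Gamma a b : set (R * R) :=
  [set y | 0 <= y.2 <= 1 /\ y.2 `^ (a / b) <= y.1 /\ y.1 <= 1 - (1 - y.2) `^ (a / b)].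

Definition Gamma_r a b : set (R * R) := [set y | interior (Gamma a b) y /\ y.2 < y.1].
Definition Gamma_l a b : set (R * R) := [set y | interior (Gamma a b) y /\ y.1 < y.2].

Definition T2 a b i x : set (R * R) :=
  [set st | 0 < st.1 /\ 0 < st.2 /\ interior (Gamma a b) (Psi2 a b i st.1 st.2 x)].
Definition Rset a b i x : set (R * R) :=
  [set st | T2 a b i x st /\ Gamma_r a b (Psi a b i st.2 x)].
Definition Lset a b i x : set (R * R) :=
  [set st | T2 a b i x st /\ Gamma_l a b (Psi a b i st.2 x)].

Fixpoint iter_dir (f : R * R -> R * R) (vs : seq (R * R)) : R * R -> R * R :=
  match vs with
  | [::] => f
  | v :: vs' => fun y => 'D_v (iter_dir f vs') y
  end.

Definition smooth_on (U : set (R * R)) (f : R * R -> R * R) : Prop :=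
  forall vs, (forall y, U y -> {for y, continuous (iter_dir f vs)}) /\
             (forall v y, U y -> derivable (iter_dir f vs) y v).

Definition diffeo_onto (A : set (R * R)) (F : R * R -> R * R) : Prop :=
  [/\ open A, open (F @` A),
      (forall p q, A p -> A q -> F p = F q -> p = q),
      smooth_on A F &
      exists G : R * R -> R * R,
        [/\ (forall p, A p -> G (F p) = p),
            (forall y, (F @` A) y -> F (G y) = y) &
            smooth_on (F @` A) G]].

End Defs.

From HB Require Import structures.
From mathcomp Require Import all_boot all_order all_algebra.
From mathcomp Require Import all_classical all_reals all_analysis.
From mathcomp Require Import ring lra.
Import Order.TTheory GRing.Theory Num.Theory.
Import numFieldNormedType.Exports.
Local Open Scope classical_set_scope.
Local Open Scope ring_scope.

Set Implicit Arguments. Unset Strict Implicit. Unset Printing Implicit Defensive.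

(* With c = vtx i and d = vtx (1 - i), the map is F (s, t) = flow_d^s (flow_c^t x),
   where flow_o^t moves each coordinate away from o at rates a and b.  The
   coordinates u_k z = (d - z_k) / (d - c) get multiplied by e^(a s), e^(b s)
   along the d-flow, so J = sg (ln u1 / a - ln u2 / b) is constant on d-orbits;
   along the c-orbit of x it equals phi t = sg (ln q1 t / a - ln q2 t / b), with
   q_k t = u_k (flow_c^t x).  Since phi' = - sg (q2 - q1) / (q1 q2) and q2 - q1
   has the sign of (d - c) ((flow_c^t x)_1 - (flow_c^t x)_2), the choice
   sg = +-(d - c) makes phi strictly decreasing on the interval of times where
   flow_c^t x stays on one side of the diagonal.  Then t = phi^-1 (J z) and
   s = (ln (u1 z) - ln (q1 t)) / a is a smooth inverse of F. *)

Lemma open_setI_preimage (T S : topologicalType) (U : set T) (f : T -> S) (B : set S) :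
  open U -> (forall y, U y -> {for y, continuous f}) -> open B ->
  open (U `&` f @^-1` B).
Proof.
rewrite !openE => oU cf oB y [Uy By].
by apply: filterI; [exact: oU | exact: cf _ _ (oB _ By)].
Qed.

Section Cn.
Variables (R : realType) (V W : normedModType R).
Implicit Types (U : set V) (f g : V -> W).

Definition cderivable U f :=
  forall y, U y -> {for y, continuous f} /\ forall v, derivable f y v.

Fixpoint Cn n U f : Prop :=
  cderivable U f /\ if n is m.+1 then forall v, Cn m U ('D_v f) else True.

Lemma CnW n U f : Cn n U f -> cderivable U f.
Proof. by case: n => [|n] []. Qed.

Lemma CnS n U f : Cn n.+1 U f -> Cn n U f.
Proof. by elim: n f => [|n IH] f [Cf Df]; split=> // v; apply: IH. Qed.

Lemma Cn_continuous n f : Cn n setT f -> continuous f.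
Proof. by move=> /CnW Cf y; have [] := Cf y I. Qed.

Lemma Cn_subset n U U' f : U' `<=` U -> Cn n U f -> Cn n U' f.
Proof.
move=> sUU'; elim: n f => [|n IH] f [Cf Df].
  by split=> // y /sUU' /Cf.
by split=> [y /sUU' /Cf // | v]; exact: IH (Df v).
Qed.

Lemma Cn_ext n U f g : f =1 g -> Cn n U f -> Cn n U g.
Proof. by move=> fg; rewrite (funext fg). Qed.

Lemma near_eq_on U f g y : open U -> (forall z, U z -> f z = g z) -> U y ->
  {near y, f =1 g}.
Proof. by move=> oU fg Uy; apply: filterS (open_nbhs_nbhs (conj oU Uy)). Qed.

Lemma cderivable_eq_on U f g : open U -> (forall y, U y -> f y = g y) ->
  cderivable U f -> cderivable U g.
Proof.
move=> oU fg Cf y Uy; have [cf df] := Cf y Uy.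
have fg_near := near_eq_on oU fg Uy.
split=> [|v]; last exact: near_eq_derivable (df v).
by apply: cvg_trans (near_eq_cvg fg_near) _; rewrite -(fg y Uy).
Qed.

Lemma Cn_eq_on n U f g : open U -> (forall y, U y -> f y = g y) ->
  Cn n U f -> Cn n U g.
Proof.
move=> oU; elim: n f g => [|n IH] f g fg [Cf Df];
  split=> //; try exact: cderivable_eq_on Cf.
move=> v; apply: IH (Df v) => y Uy.
exact/near_eq_derive/(near_eq_on oU fg Uy).
Qed.

Lemma Cn_cst n U (a : W) : Cn n U (fun=> a).
Proof.
have Ca U' (b : W) : cderivable U' (fun=> b).
  by move=> y _; split=> [|v]; [exact: cvg_cst | exact: derivable_cst].
elim: n a => [|n IH] a; split=> // v.
by apply: Cn_ext (IH 0) => y; rewrite derive_cst.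
Qed.

Lemma is_derive_linear f y v w :
  (forall h : R, f (h *: v + y) = h *: w + f y) -> is_derive y v f w.
Proof.
move=> flin.
have q : (fun h : R => h^-1 *: ((f \o shift y) (h *: v) - f y)) @ 0^' --> w.
  apply: cvg_trans (near_eq_cvg _) (cvg_cst w); near=> h.
  have hN0 : h != 0 by near: h; exact: nbhs_dnbhs_neq.
  by rewrite /= flin addrK scalerA mulVf // scale1r.
by apply: DeriveDef; [apply/cvg_ex; exists w | exact: cvg_lim q].
Unshelve. all: by end_near.
Qed.

Lemma Cn_linear n U f : continuous f ->
  (forall (h : R) v y, f (h *: v + y) = h *: f v + f y) -> Cn n U f.
Proof.
move=> cf flin.
have Df v y : is_derive y v f (f v) by apply: is_derive_linear => h; exact: flin.
have Cf : cderivable U f.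
  by move=> y _; split=> [|v]; [exact: cf | case: (Df v y)].
case: n => [|n]; split=> // v.
by apply: Cn_ext (Cn_cst n U (f v)) => y; rewrite derive_val.
Qed.

Lemma derive_line f y v : 'D_v f y = 'D_1 (fun h : R => f (h *: v + y)) 0.
Proof.
rewrite /derive; set q1 := fun h => _; set q2 := fun h => _.
suff -> : q1 = q2 by [].
by apply/funext => h; rewrite /q1 /q2 /= scale0r add0r addr0 [_%:A]mulr1.
Qed.

Lemma cderivableD U f g : cderivable U f -> cderivable U g ->
  cderivable U (fun y => f y + g y).
Proof.
move=> Cf Cg y Uy; have [cf df] := Cf y Uy; have [cg dg] := Cg y Uy.
by split=> [|v]; [exact: continuousD | exact: derivableD].
Qed.

Lemma CnD n U f g : open U -> Cn n U f -> Cn n U g -> Cn n U (fun y => f y + g y).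
Proof.
move=> oU; elim: n f g => [|n IH] f g Cf Cg; split;
  try exact: cderivableD (CnW Cf) (CnW Cg); first by [].
move=> v; apply: (Cn_eq_on (f := fun y => 'D_v f y + 'D_v g y)) => //.
  move=> y Uy; have [_ df] := CnW Cf Uy; have [_ dg] := CnW Cg Uy.
  by rewrite deriveD.
by apply: IH; [case: Cf => _; apply | case: Cg => _; apply].
Qed.

End Cn.

Section CnReal.
Variables (R : realType) (V : normedModType R).
Implicit Types (U : set V) (f g : V -> R).

Lemma open_gt0 f : continuous f -> open [set y | 0 < f y].
Proof.
by move=> cf; apply: (@open_comp _ _ f [set x | 0 < x]); [move=> y _; exact: cf | exact: open_gt].
Qed.

Lemma cderivableM U f g : cderivable U f -> cderivable U g ->
  cderivable U (fun y => f y * g y).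
Proof.
move=> Cf Cg y Uy; have [cf df] := Cf y Uy; have [cg dg] := Cg y Uy.
by split=> [|v]; [exact: continuousM | exact: derivableM].
Qed.

Lemma CnM n U f g : open U -> Cn n U f -> Cn n U g -> Cn n U (fun y => f y * g y).
Proof.
move=> oU; elim: n f g => [|n IH] f g Cf Cg; split;
  try exact: cderivableM (CnW Cf) (CnW Cg); first by [].
move=> v; apply: (Cn_eq_on (f := fun y => f y * 'D_v g y + g y * 'D_v f y)) => //.
  move=> y Uy; have [_ df] := CnW Cf Uy; have [_ dg] := CnW Cg Uy.
  by rewrite deriveM.
have [[_ Df] [_ Dg]] := (Cf, Cg).
by apply: CnD => //; apply: IH; [exact: CnS | exact: Dg | exact: CnS | exact: Df].
Qed.

Lemma CnN n U f : open U -> Cn n U f -> Cn n U (fun y => - f y).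
Proof.
move=> oU Cf; apply: (Cn_ext (f := fun y => -1 * f y)) => [y|]; first exact: mulN1r.
by apply: CnM => //; exact: Cn_cst.
Qed.

Lemma CnB n U f g : open U -> Cn n U f -> Cn n U g -> Cn n U (fun y => f y - g y).
Proof. by move=> oU Cf Cg; apply: CnD => //; exact: CnN. Qed.

Lemma is_derive_compr (phi : R -> R) f y v dphi df :
  is_derive (f y) 1 phi dphi -> is_derive y v f df ->
  is_derive y v (phi \o f) (dphi * df).
Proof.
move=> Dphi [/derivable1P fv <-].
pose l h := f (h *: v + y).
have l0 : l 0 = f y by rewrite /l scale0r add0r.
rewrite -l0 in Dphi.
have [Dc Dcv] := is_derive1_comp Dphi (derivableP fv).
split; first exact/derivable1P.
by rewrite derive_line [in RHS]derive_line.
Qed.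

Lemma cderivable_comp (I : set R) U (phi : R -> R) f :
  (forall y, U y -> I (f y)) -> cderivable I phi -> cderivable U f ->
  cderivable U (fun y => phi (f y)).
Proof.
move=> fUI Cphi Cf y Uy; have [cf df] := Cf y Uy.
have [cphi dphi] := Cphi _ (fUI y Uy).
split=> [|v]; first exact: continuous_comp cf cphi.
by case: (is_derive_compr (derivableP (dphi 1)) (derivableP (df v))).
Qed.

Lemma Cn_comp n (I : set R) U (phi : R -> R) f : open I -> open U ->
  (forall y, U y -> I (f y)) -> Cn n I phi -> Cn n U f ->
  Cn n U (fun y => phi (f y)).
Proof.
move=> oI oU; elim: n phi f => [|n IH] phi f fUI Cphi Cf; split;
  try exact: cderivable_comp fUI (CnW Cphi) (CnW Cf); first by [].
move=> v; apply: (Cn_eq_on (f := fun y => 'D_1 phi (f y) * 'D_v f y)) => //.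
  move=> y Uy; have [_ df] := CnW Cf Uy; have [_ dphi] := CnW Cphi (fUI y Uy).
  by case: (is_derive_compr (derivableP (dphi 1)) (derivableP (df v))).
have [[_ Dphi] [_ Df]] := (Cphi, Cf).
by apply: CnM => //; [apply: (IH ('D_1 phi) f) => //; [exact: Dphi | exact: CnS] | exact: Df].
Qed.

Lemma is_derive_pair f g y v df dg :
  is_derive y v f df -> is_derive y v g dg ->
  is_derive y v (fun y => (f y, g y)) (df, dg).
Proof.
move=> [fv <-] [gv <-].
have q : (fun h : R => h^-1 *: (((fun y => (f y, g y)) \o shift y) (h *: v) - (f y, g y)))
    @ 0^' --> ('D_v f y, 'D_v g y).
  by apply: (@cvg_pair _ _ _ _ (nbhs ('D_v f y)) (nbhs ('D_v g y))); [exact: fv | exact: gv].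
by apply: DeriveDef; [apply/cvg_ex; eexists; exact: q | exact: cvg_lim q].
Qed.

Lemma cderivable_pair U f g : cderivable U f -> cderivable U g ->
  cderivable U (fun y => (f y, g y)).
Proof.
move=> Cf Cg y Uy; have [cf df] := Cf y Uy; have [cg dg] := Cg y Uy.
split=> [|v]; first exact: (@cvg_pair _ _ _ _ (nbhs (f y)) (nbhs (g y))).
by case: (is_derive_pair (derivableP (df v)) (derivableP (dg v))).
Qed.

Lemma Cn_pair n U f g : open U -> Cn n U f -> Cn n U g -> Cn n U (fun y => (f y, g y)).
Proof.
move=> oU; elim: n f g => [|n IH] f g Cf Cg; split;
  try exact: cderivable_pair (CnW Cf) (CnW Cg); first by [].
move=> v; apply: (Cn_eq_on (f := fun y => ('D_v f y, 'D_v g y))) => //.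
  move=> y Uy; have [_ df] := CnW Cf Uy; have [_ dg] := CnW Cg Uy.
  by case: (is_derive_pair (derivableP (df v)) (derivableP (dg v))).
by apply: IH; [case: Cf => _; apply | case: Cg => _; apply].
Qed.

End CnReal.

Section CnLine.
Variable R : realType.
Implicit Types (I : set R) (phi : R -> R).

Lemma cderivable1 I phi : (forall t, I t -> derivable phi t 1) -> cderivable I phi.
Proof.
move=> dphi t It; have /derivable1_diffP dt := dphi t It.
by split=> [|v]; [exact: differentiable_continuous | exact: diff_derivable].
Qed.

Lemma Cn_derive1 n I phi : open I -> (forall t, I t -> derivable phi t 1) ->
  Cn n I ('D_1 phi) -> Cn n.+1 I phi.
Proof.
move=> oI dphi C1; split; first exact: cderivable1.
move=> v; apply: (Cn_eq_on (f := fun t => v * 'D_1 phi t)) => //.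
  move=> t It; have /derivable1_diffP dt := dphi t It.
  by rewrite [RHS]deriveE // diff1E // derive1E.
by apply: CnM => //; exact: Cn_cst.
Qed.

Lemma Cn_id n I : Cn n I id.
Proof. by apply: Cn_linear => // t; exact: cvg_id. Qed.

Lemma Cn_expR n : Cn n setT (@expR R).
Proof.
elim: n => [|n IH]; first by split=> //; apply: cderivable1 => t _; exact: derivable_expR.
apply: Cn_derive1 => [| t _ |]; [exact: openT | exact: derivable_expR |].
by rewrite derive_expR.
Qed.

Lemma open_neq0 : open [set t : R | t != 0].
Proof.
rewrite (_ : [set t | t != 0] = ~` [set 0]); first exact/closed_openC/closed_eq.
by apply/seteqP; split=> t /= /eqP.
Qed.

Lemma Cn_inv n : Cn n [set t : R | t != 0] (fun t : R => t^-1).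
Proof.
have dinv (t : R) : t != 0 -> is_derive t (1 : R) GRing.inv (- t ^- 2).
  by move=> t0; rewrite -[X in is_derive _ _ _ X]mulr1; exact: (@is_deriveV R id).
elim: n => [|n IH].
  by split=> //; apply: cderivable1 => t t0; case: (dinv t t0).
apply: Cn_derive1 => [| t t0 |]; [exact: open_neq0 | by case: (dinv t t0) |].
apply: (Cn_eq_on (f := fun t : R => - (t^-1 * t^-1))) => [|t t0|]; first exact: open_neq0.
  by rewrite (@derive_val _ _ _ _ _ _ _ (dinv t t0)) expr2 invfM.
by apply: CnN; [exact: open_neq0 | apply: CnM => //; exact: open_neq0].
Qed.

Lemma Cn_ln n : Cn n [set t : R | 0 < t] (@ln R).
Proof.
case: n => [|n].
  by split=> //; apply: cderivable1 => t t0; case: (is_derive1_ln t0).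
apply: Cn_derive1 => [| t t0 |]; [exact: open_gt | by case: (is_derive1_ln t0) |].
apply: (Cn_eq_on (f := fun t : R => t^-1)) => [|t t0|]; first exact: open_gt.
  by rewrite (@derive_val _ _ _ _ _ _ _ (is_derive1_ln t0)).
by apply: Cn_subset (Cn_inv n) => t /= /gt_eqF ->.
Qed.

End CnLine.

Section CnPlane.
Variable R : realType.

Lemma Cn_fst n (U : set (R * R)) : Cn n U fst.
Proof. by apply: Cn_linear => // p; exact: cvg_fst. Qed.

Lemma Cn_snd n (U : set (R * R)) : Cn n U snd.
Proof. by apply: Cn_linear => // p; exact: cvg_snd. Qed.

Lemma smooth_on_Cn (U : set (R * R)) (F : R * R -> R * R) :
  (forall n, Cn n U F) -> smooth_on U F.
Proof.
move=> CF.
have Citer vs n : Cn n U (iter_dir F vs).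
  by elim: vs n => [|v vs IH] n //=; case: (IH n.+1) => _; apply.
by move=> vs; split=> [y Uy | v y Uy]; have [] := CnW (Citer vs 0%N) Uy.
Qed.

End CnPlane.

Section InverseLine.
Variables (R : realType) (I : set R) (phi : R -> R).
Hypotheses (oI : open I) (itvI : is_interval I).

Section Decreasing.
Hypotheses (Cphi : cderivable I phi) (phi'_lt0 : forall t, I t -> 'D_1 phi t < 0).

Lemma derive_lt0_decr t u : I t -> I u -> t < u -> phi u < phi t.
Proof.
move=> It Iu tu.
have Icc z : z \in `[t, u] -> I z by rewrite in_itv; exact: itvI.
have Ioo z : z \in `]t, u[ -> I z by rewrite !in_itv => /andP[? ?]; apply: Icc; rewrite in_itv /= !ltW.
apply: (ltr0_derive1_lt_cc (f := phi) (a := t) (b := u)) => //.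
- by move=> z /Ioo /Cphi [].
- by move=> z /Ioo Iz; rewrite derive1E phi'_lt0.
- apply: continuous_in_subspaceT => z; rewrite inE => /Icc Iz.
  by have [] := Cphi Iz.
- by rewrite in_itv /= lexx ltW.
- by rewrite in_itv /= lexx ltW.
Qed.

Lemma derive_lt0_inj : {in I &, injective phi}.
Proof.
move=> t u /[!inE] It Iu tu; apply/eqP; apply: contraT; rewrite neq_lt.
by case/orP=> /(derive_lt0_decr _ _) lt; [have := lt It Iu | have := lt Iu It];
  rewrite tu ltxx.
Qed.

Lemma open_image_derive_lt0 : open (phi @` I).
Proof.
rewrite openE => _ [t It <-].
have /nbhs_ballP [e /= e0 tI] := open_nbhs_nbhs (conj oI It).
have e20 : 0 < e / 2 by rewrite divr_gt0.
have [I_lo I_hi] : I (t - e / 2) /\ I (t + e / 2).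
  split; apply: tI; rewrite /ball /=.
    by rewrite opprB addrC subrK ger0_norm ?ltW //; lra.
  by rewrite opprD addrA subrr sub0r normrN ger0_norm ?ltW //; lra.
have phi_hi : phi (t + e / 2) < phi t by apply: derive_lt0_decr; rewrite ?ltrDl.
have phi_lo : phi t < phi (t - e / 2) by apply: derive_lt0_decr; rewrite ?gtrDl ?oppr_lt0.
near=> k.
have k_hi : phi (t + e / 2) < k by near: k; exact: lt_nbhsr.
have k_lo : k < phi (t - e / 2) by near: k; exact: lt_nbhsl.
have [c c_in <-] : exists2 c, c \in `[t - e / 2, t + e / 2] & phi c = k.
  apply: IVT; first lra.
    apply: continuous_in_subspaceT => z; rewrite inE /= in_itv /= => /(itvI I_lo I_hi).
    by case/Cphi.
  by rewrite ge_min le_max (ltW k_hi) (ltW k_lo) !orbT.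
by exists c => //; move: c_in; rewrite in_itv; exact: itvI.
Unshelve. all: by end_near.
Qed.

End Decreasing.

Hypotheses (Cphi : forall n, Cn n I phi) (phi'_lt0 : forall t, I t -> 'D_1 phi t < 0).

Lemma Cn_pinv_derive_lt0 n : Cn n (phi @` I) (pinv I phi).
Proof.
have C0phi := CnW (Cphi 0).
have oJ := open_image_derive_lt0 C0phi phi'_lt0.
set h := pinv I phi.
have hK t : I t -> h (phi t) = t.
  by move=> It; apply: (pinvKV _ (derive_lt0_inj C0phi phi'_lt0)); rewrite inE.
have hI k : (phi @` I) k -> I (h k) by case=> t It <-; rewrite hK.
have h'E k : (phi @` I) k -> is_derive k 1 h ('D_1 phi (h k))^-1.
  case=> t It <-; rewrite hK //.
  have Inear : \forall s \near t, I s by exact: open_nbhs_nbhs (conj oI It).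
  apply: is_derive_inverse.
  - by apply: filterS Inear => s /hK.
  - by apply: filterS Inear => s /C0phi [].
  - by have [_ /(_ 1) /derivableP] := C0phi t It.
  - by rewrite lt_eqF // phi'_lt0.
elim: n => [|n IH].
  by split=> //; apply: cderivable1 => k Jk; case: (h'E k Jk).
apply: Cn_derive1 => [// | k Jk | ]; first by case: (h'E k Jk).
apply: (Cn_eq_on (f := fun k => ('D_1 phi (h k))^-1)) => [// | k Jk | ].
  by rewrite (@derive_val _ _ _ _ _ _ _ (h'E k Jk)).
apply: (Cn_comp (I := [set s | s != 0]) (f := fun k => 'D_1 phi (h k))).
- exact: open_neq0.
- exact: oJ.
- by move=> k Jk; rewrite /= lt_eqF // phi'_lt0 //; exact: hI.
- exact: Cn_inv.
apply: (Cn_comp (I := I) (phi := 'D_1 phi) (f := h)) => //.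
by case: (Cphi n.+1) => _; apply.
Qed.

End InverseLine.

Section Flow.
Variables (R : realType) (a b : R).

Definition flow (o t : R) (y : R * R) : R * R :=
  (o + (y.1 - o) * expR (a * t), o + (y.2 - o) * expR (b * t)).

Lemma Cn_expRM {V : normedModType R} n (U : set V) (k : R) (g : V -> R) :
  open U -> Cn n U g -> Cn n U (fun v => expR (k * g v)).
Proof.
move=> oU Cg; apply: (Cn_comp (I := setT) (phi := expR)) => //; [exact: openT | exact: Cn_expR |].
by apply: CnM => //; exact: Cn_cst.
Qed.

Lemma Cn_expR_affine {V : normedModType R} n (U : set V) (o k : R) (f g : V -> R) :
  open U -> Cn n U f -> Cn n U g -> Cn n U (fun v => o + (f v - o) * expR (k * g v)).
Proof.
move=> oU Cf Cg; apply: CnD => //; first exact: Cn_cst.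
apply: CnM => //; first by apply: CnB => //; exact: Cn_cst.
exact: Cn_expRM.
Qed.

Lemma Cn_flow {V : normedModType R} n (U : set V) o (g : V -> R) (y : V -> R * R) :
  open U -> Cn n U g -> Cn n U (fun v => (y v).1) -> Cn n U (fun v => (y v).2) ->
  Cn n U (fun v => flow o (g v) (y v)).
Proof. by move=> oU Cg Cy1 Cy2; apply: Cn_pair => //; exact: Cn_expR_affine. Qed.

End Flow.

Lemma is_derive_ln_1BexpR (R : realType) (w k t : R) : k != 0 ->
  0 < 1 - w * expR (k * t) ->
  is_derive t 1 (fun s => ln (1 - w * expR (k * s)) / k) (1 - (1 - w * expR (k * t))^-1).
Proof.
move=> k0 qt.
have Dlin : is_derive t 1 (fun s : R => k * s) k.
  have := is_deriveZ k (is_derive_id t (1 : R)).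
  by rewrite /GRing.scale /= mulr1.
have Dexp : is_derive t 1 (fun s => expR (k * s)) (expR (k * t) * k).
  exact: is_derive1_comp (is_derive_expR (k * t)) Dlin.
have Dq : is_derive t 1 (fun s => 1 - w * expR (k * s)) (- (w * (expR (k * t) * k))).
  have := is_deriveB (is_derive_cst (1 : R) t 1) (is_deriveZ w Dexp).
  by rewrite sub0r.
have Dln := @is_derive1_comp R (@ln R) _ t _ _ (is_derive1_ln qt) Dq.
rewrite (_ : (fun s => _ / k) = k^-1 \*: (@ln R \o (fun s => 1 - w * expR (k * s)))).
  apply: is_derive_eq (is_deriveZ k^-1 Dln) _.
  by rewrite /GRing.scale /=; field; rewrite k0 gt_eqF.
by apply/funext => s; rewrite /= mulrC.
Qed.

Section Diffeo.
Variables (R : realType) (a b c d sg : R) (x : R * R).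
Hypotheses (b_gt0 : 0 < b) (b_lt_a : b < a) (d_neq_c : d != c) (sg_neq0 : sg != 0).

Local Notation flow := (flow a b).

Definition w1 := (x.1 - c) / (d - c).
Definition w2 := (x.2 - c) / (d - c).
Hypotheses (w1_gt0 : 0 < w1) (w2_gt0 : 0 < w2).

Definition q1 t := 1 - w1 * expR (a * t).
Definition q2 t := 1 - w2 * expR (b * t).
Definition Tset := [set t | 0 < q1 t /\ 0 < q2 t /\ 0 < sg * (q2 t - q1 t)].
Definition phi t := sg * (ln (q1 t) / a - ln (q2 t) / b).

Lemma a_gt0 : 0 < a. Proof. exact: lt_trans b_lt_a. Qed.

Lemma Cn_q1 n (U : set R) : open U -> Cn n U q1.
Proof.
move=> oU; apply: CnB (Cn_cst _ _ _) _ => //.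
by apply: CnM (Cn_cst _ _ _) _ => //; exact: Cn_expRM (Cn_id _ _).
Qed.

Lemma Cn_q2 n (U : set R) : open U -> Cn n U q2.
Proof.
move=> oU; apply: CnB (Cn_cst _ _ _) _ => //.
by apply: CnM (Cn_cst _ _ _) _ => //; exact: Cn_expRM (Cn_id _ _).
Qed.

Lemma open_Tset : open Tset.
Proof.
have oT : open [set: R] := openT.
apply: openI; [|apply: openI]; apply: open_gt0; apply: (@Cn_continuous _ _ _ 0%N).
- exact: Cn_q1.
- exact: Cn_q2.
- by apply: CnM (Cn_cst _ _ _) _ => //; apply: CnB; [| exact: Cn_q2 | exact: Cn_q1].
Qed.

Lemma q2Bq1E t : q2 t - q1 t = expR (b * t) * (w1 * expR ((a - b) * t) - w2).
Proof.
rewrite mulrBr mulrCA -expRD (_ : b * t + (a - b) * t = a * t); last by ring.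
by rewrite /q1 /q2; ring.
Qed.

Lemma Tset_interval : is_interval Tset.
Proof.
move=> t w [q1t [q2t st]] [q1w [q2w sw]] u /andP[tu uw].
have decr k wk : 0 < wk -> 0 <= k -> wk * expR (k * u) <= wk * expR (k * w).
  by move=> wk0 k0; rewrite ler_pM2l // ler_expR ler_wpM2l.
have incr s s' : s <= s' -> w1 * expR ((a - b) * s) - w2 <= w1 * expR ((a - b) * s') - w2.
  by move=> ss'; rewrite lerD2r ler_pM2l // ler_expR ler_wpM2l // subr_ge0 ltW.
split; [|split].
- by apply: lt_le_trans q1w _; rewrite lerD2l lerN2 decr // ltW // a_gt0.
- by apply: lt_le_trans q2w _; rewrite lerD2l lerN2 decr // ltW.
(* the sign condition is upward closed if [sg > 0], downward closed if [sg < 0] *)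
move: st sw; rewrite !q2Bq1E => st sw; have [sg_lt0|sg_gt0|sg0] := ltgtP sg 0.
- rewrite nmulr_rgt0 // pmulr_rlt0 ?expR_gt0 //.
  by rewrite nmulr_rgt0 // pmulr_rlt0 ?expR_gt0 // in sw; apply: le_lt_trans (incr _ _ uw) sw.
- rewrite pmulr_rgt0 // pmulr_rgt0 ?expR_gt0 //.
  by rewrite pmulr_rgt0 // pmulr_rgt0 ?expR_gt0 // in st; apply: lt_le_trans st (incr _ _ tu).
- by move: sg_neq0; rewrite sg0 eqxx.
Qed.

Lemma Cn_ln_q1 n : Cn n Tset (fun t => ln (q1 t)).
Proof.
have oT := open_Tset.
apply: (Cn_comp (I := [set s | 0 < s])) => //; [by move=> t [] | exact: Cn_ln | exact: Cn_q1].
Qed.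

Lemma Cn_ln_q2 n : Cn n Tset (fun t => ln (q2 t)).
Proof.
have oT := open_Tset.
apply: (Cn_comp (I := [set s | 0 < s])) => //; [by move=> t [_ []] | exact: Cn_ln | exact: Cn_q2].
Qed.

Lemma Cn_phi n : Cn n Tset phi.
Proof.
have oT := open_Tset.
apply: CnM (Cn_cst _ _ _) _ => //.
by apply: CnB => //; apply: CnM (Cn_cst _ _ _) => //; [exact: Cn_ln_q1 | exact: Cn_ln_q2].
Qed.

Lemma derive_phi_lt0 t : Tset t -> 'D_1 phi t < 0.
Proof.
move=> [q1t [q2t st]].
have D := is_deriveM (is_derive_cst sg t 1)
  (is_deriveB (is_derive_ln_1BexpR (lt0r_neq0 a_gt0) q1t)
              (is_derive_ln_1BexpR (lt0r_neq0 b_gt0) q2t)).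
rewrite (@derive_val _ _ _ _ _ _ _ D) /= scaler0 addr0.
rewrite (_ : _ *: _ = - (sg * (q2 t - q1 t)) / (q1 t * q2 t)); last first.
  by rewrite /GRing.scale /= -/(q1 t) -/(q2 t); field; rewrite !gt_eqF.
by rewrite mulNr oppr_lt0 divr_gt0 // mulr_gt0.
Qed.

Lemma dBc_neq0 : d - c != 0. Proof. by rewrite subr_eq0. Qed.

Definition u1 (z : R * R) := (d - z.1) / (d - c).
Definition u2 (z : R * R) := (d - z.2) / (d - c).
Definition Pset := [set z | 0 < u1 z /\ 0 < u2 z].
Definition J z := sg * (ln (u1 z) / a - ln (u2 z) / b).

Definition F (p : R * R) := flow d p.1 (flow c p.2 x).

Local Notation h := (pinv Tset phi).

Definition W := Pset `&` J @^-1` (phi @` Tset).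
Definition G z := ((ln (u1 z) - ln (q1 (h (J z)))) / a, h (J z)).

Lemma u1_flow_c t : u1 (flow c t x) = q1 t.
Proof. by rewrite /u1 /q1 /w1 /=; field; exact: dBc_neq0. Qed.

Lemma u2_flow_c t : u2 (flow c t x) = q2 t.
Proof. by rewrite /u2 /q2 /w2 /=; field; exact: dBc_neq0. Qed.

Lemma u1_flow_d s z : u1 (flow d s z) = u1 z * expR (a * s).
Proof. by rewrite /u1 /= mulrAC; congr (_ * _); ring. Qed.

Lemma u2_flow_d s z : u2 (flow d s z) = u2 z * expR (b * s).
Proof. by rewrite /u2 /= mulrAC; congr (_ * _); ring. Qed.

Lemma u2Bu1 z : (d - c) * (u2 z - u1 z) = z.1 - z.2.
Proof. by rewrite /u1 /u2; field; exact: dBc_neq0. Qed.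

Lemma u_inj z z' : u1 z = u1 z' -> u2 z = u2 z' -> z = z'.
Proof.
case: z z' => [z1 z2] [z1' z2']; rewrite /u1 /u2 /=.
by move=> /(mulIf (invr_neq0 dBc_neq0))/addrI/oppr_inj -> /(mulIf (invr_neq0 dBc_neq0))/addrI/oppr_inj ->.
Qed.

Lemma ln_mul_expR (u k s : R) : 0 < u -> ln (u * expR (k * s)) = ln u + k * s.
Proof. by move=> u0; rewrite lnM ?posrE ?expR_gt0 // expRK. Qed.

Lemma J_flow_d s z : Pset z -> J (flow d s z) = J z.
Proof.
move=> [u1z u2z]; rewrite /J u1_flow_d u2_flow_d !ln_mul_expR //.
by congr (sg * _); field; rewrite !gt_eqF // a_gt0.
Qed.

Lemma J_F p : Tset p.2 -> J (F p) = phi p.2.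
Proof.
move=> [q1p [q2p _]].
by rewrite J_flow_d /J ?u1_flow_c ?u2_flow_c //; split; rewrite ?u1_flow_c ?u2_flow_c.
Qed.

Lemma pinv_phiK t : Tset t -> h (phi t) = t.
Proof.
move=> Tt; apply: (pinvKV _ (derive_lt0_inj Tset_interval (CnW (Cn_phi 0)) derive_phi_lt0)).
by rewrite inE.
Qed.

Lemma F_W p : Tset p.2 -> W (F p).
Proof.
move=> Tp; have [q1p [q2p _]] := Tp.
split; last by exists p.2; rewrite ?J_F.
by split; rewrite /F ?u1_flow_d ?u2_flow_d ?u1_flow_c ?u2_flow_c mulr_gt0 ?expR_gt0.
Qed.

Lemma mul_expR_lnB (u q : R) : 0 < u -> 0 < q -> q * expR (ln u - ln q) = u.
Proof. by move=> u0 q0; rewrite expRB !lnK ?posrE // mulrC divfK // gt_eqF. Qed.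

Lemma G_F p : Tset p.2 -> G (F p) = p.
Proof.
case: p => s t /= Tt; have [q1t _] := Tt.
rewrite /G J_F // pinv_phiK // /F u1_flow_d u1_flow_c ln_mul_expR //.
by rewrite addrC addKr [a * _]mulrC mulfK // gt_eqF // a_gt0.
Qed.

Lemma F_G z : W z -> F (G z) = z.
Proof.
move=> [[u1z u2z] [t Tt phit]]; have [q1t [q2t _]] := Tt.
rewrite /G -phit pinv_phiK //.
have lnE : (ln (u1 z) - ln (q1 t)) / a = (ln (u2 z) - ln (q2 t)) / b.
  by move/(mulfI sg_neq0): phit; rewrite !mulrBl; lra.
apply: u_inj; rewrite /F /= ?u1_flow_d ?u2_flow_d ?u1_flow_c ?u2_flow_c.
  by rewrite [a * _]mulrC divfK ?mul_expR_lnB // gt_eqF // a_gt0.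
by rewrite lnE [b * _]mulrC divfK ?mul_expR_lnB // gt_eqF.
Qed.

Lemma Cn_u1 n (U : set (R * R)) : open U -> Cn n U u1.
Proof.
move=> oU; apply: CnM (Cn_cst _ _ _) => //.
by apply: CnB (Cn_cst _ _ _) (Cn_fst _ _).
Qed.

Lemma Cn_u2 n (U : set (R * R)) : open U -> Cn n U u2.
Proof.
move=> oU; apply: CnM (Cn_cst _ _ _) => //.
by apply: CnB (Cn_cst _ _ _) (Cn_snd _ _).
Qed.

Lemma open_Pset : open Pset.
Proof.
by apply: openI; apply: open_gt0; apply: (@Cn_continuous _ _ _ 0%N);
  [exact: Cn_u1 openT | exact: Cn_u2 openT].
Qed.

Lemma Cn_J n : Cn n Pset J.
Proof.
have oP := open_Pset.
have Cln (u : R * R -> R) : (forall z, Pset z -> 0 < u z) -> Cn n Pset u ->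
    Cn n Pset (fun z => ln (u z)).
  by move=> u_gt0 Cu; apply: (Cn_comp (I := [set s | 0 < s])) => //; exact: Cn_ln.
apply: CnM (Cn_cst _ _ _) _ => //.
apply: CnB => //; apply: CnM (Cn_cst _ _ _) => //; apply: Cln.
- by move=> z [].
- exact: Cn_u1.
- by move=> z [].
- exact: Cn_u2.
Qed.

Lemma open_phi_image : open (phi @` Tset).
Proof. exact: open_image_derive_lt0 open_Tset Tset_interval (CnW (Cn_phi 0)) derive_phi_lt0. Qed.

Lemma open_W : open W.
Proof.
apply: open_setI_preimage open_Pset _ open_phi_image.
by move=> z Pz; have [] := CnW (Cn_J 0) Pz.
Qed.

Lemma pinv_phi_Tset z : W z -> Tset (h (J z)).
Proof. by case=> _ [t Tt <-]; rewrite pinv_phiK. Qed.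

Lemma Cn_G n : Cn n W G.
Proof.
have oW := open_W.
have Ch : Cn n W (fun z => h (J z)).
  apply: (Cn_comp (I := phi @` Tset)) => //.
  - exact: open_phi_image.
  - by move=> z [].
  - exact: Cn_pinv_derive_lt0 open_Tset Tset_interval Cn_phi derive_phi_lt0 n.
  - by apply: Cn_subset (Cn_J n); exact: subIsetl.
apply: Cn_pair => //; apply: CnM (Cn_cst _ _ _) => //; apply: CnB => //.
  apply: (Cn_comp (I := [set s | 0 < s])) => //; first by move=> z [[]].
  - exact: Cn_ln.
  - exact: Cn_u1.
apply: (Cn_comp (I := Tset) (phi := fun t => ln (q1 t))) => //.
- exact: open_Tset.
- exact: pinv_phi_Tset.
- exact: Cn_ln_q1.
Qed.

Lemma Cn_F n (U : set (R * R)) : open U -> Cn n U F.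
Proof.
move=> oU; apply: Cn_flow (Cn_fst _ _) _ _ => //;
  by apply: Cn_expR_affine (Cn_cst _ _ _) (Cn_snd _ _).
Qed.

Lemma diffeo_onto_F (A : set (R * R)) : open A -> (forall p, A p -> Tset p.2) ->
  diffeo_onto A F.
Proof.
move=> oA AT.
have FA : F @` A = W `&` G @^-1` A.
  apply/seteqP; split=> [_ [p Ap <-] | z [Wz AGz]].
    by split; [exact: F_W (AT p Ap) | rewrite /= G_F //; exact: AT].
  by exists (G z) => //; exact: F_G.
split.
- exact: oA.
- rewrite FA; apply: open_setI_preimage open_W _ oA.
  by move=> z Wz; have [] := CnW (Cn_G 0) Wz.
- by move=> p q Ap Aq Fpq; rewrite -(G_F (AT p Ap)) Fpq G_F //; exact: AT.
- by apply: smooth_on_Cn => n; exact: Cn_F.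
exists G; split.
- by move=> p Ap; exact: G_F (AT p Ap).
- by move=> _ [p Ap <-]; rewrite G_F //; exact: AT.
by apply: smooth_on_Cn => n; rewrite FA; apply: Cn_subset (Cn_G n); exact: subIsetl.
Qed.

End Diffeo.

Lemma lt01_ball (R : realType) (y e : R) : 0 < e -> (forall z, `|y - z| < e -> 0 <= z <= 1) ->
  0 < y < 1.
Proof.
move=> e0 yB.
have [lo hi] : `|y - (y - e / 2)| < e /\ `|y - (y + e / 2)| < e.
  split; first by rewrite opprB addrC subrK ger0_norm; lra.
  by rewrite opprD addrA subrr sub0r normrN ger0_norm; lra.
move: (yB _ lo) (yB _ hi) => /andP[? _] /andP[_ ?].
by apply/andP; split; lra.
Qed.

Lemma interior_Gamma (R : realType) (a b : R) (y : R * R) :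
  interior (Gamma a b) y -> 0 < y.1 < 1 /\ 0 < y.2 < 1.
Proof.
move=> /nbhs_ballP [e /= e0 yG].
have G01 z : Gamma a b z -> 0 <= z.1 <= 1 /\ 0 <= z.2 <= 1.
  move=> [/andP[z2_ge0 z2_le1] [lo hi]].
  have := powR_ge0 z.2 (a / b); have := powR_ge0 (1 - z.2) (a / b).
  rewrite z2_ge0 z2_le1 => p1 p2; split=> //; apply/andP; split.
    exact: le_trans p2 lo.
  by apply: le_trans hi _; rewrite gerBl.
split; apply: (@lt01_ball _ _ e) => // z yz.
- by have /G01[] : Gamma a b (z, y.2) by apply: yG; split; [exact: yz | exact: ballxx].
- by have /G01[] : Gamma a b (y.1, z) by apply: yG; split; [exact: ballxx | exact: yz].
Qed.

Lemma open_lt (R : realType) (V : normedModType R) (f g : V -> R) :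
  continuous f -> continuous g -> open [set y | f y < g y].
Proof.
move=> cf cg; rewrite (_ : [set y | _] = [set y | 0 < g y - f y]).
  by apply: open_gt0 => y; exact: (continuousB (cg y) (cf y)).
by apply/seteqP; split=> y /=; rewrite subr_gt0.
Qed.

Section Vertices.
Variables (R : realType) (a b : R) (i : bool) (x : R * R).

Local Notation c := (vtx R i).
Local Notation d := (vtx R (~~ i)).

Lemma vtx_cases : (c = 0 /\ d = 1) \/ (c = 1 /\ d = 0).
Proof. by case: i; [right | left]. Qed.

Lemma vtx_neq : d != c.
Proof. by case: vtx_cases => [[-> ->] | [-> ->]]; rewrite // eq_sym oner_neq0. Qed.

Lemma vtx_ratio_gt0 (y : R) : 0 < y < 1 -> 0 < (d - y) / (d - c) /\ 0 < (y - c) / (d - c).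
Proof.
case/andP=> y_gt0 y_lt1; case: vtx_cases => [[-> ->] | [-> ->]].
  by rewrite !subr0 !divr1 subr_gt0.
by rewrite !sub0r invrN1 !mulrN1 opprK oppr_gt0 subr_lt0.
Qed.

Lemma continuous_Psi : continuous (fun p : R * R => Psi a b i p.2 x).
Proof.
apply: (@Cn_continuous _ _ _ 0%N).
apply: (@Cn_flow R a b _ 0%N setT c snd (fun=> x)); [exact: openT | exact: Cn_snd | |];
  exact: Cn_cst.
Qed.

Lemma open_T2 : open (T2 a b i x).
Proof.
have cF : continuous (fun p : R * R => Psi2 a b i p.1 p.2 x).
  by apply: (@Cn_continuous _ _ _ 0%N); apply: Cn_F; exact: openT.
apply: openI; [|apply: openI].
- by apply: open_lt => p; [exact: cvg_cst | exact: cvg_fst].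
- by apply: open_lt => p; [exact: cvg_cst | exact: cvg_snd].
by apply: (@open_comp _ _ _ (interior (Gamma a b))) => [p _ | ]; [exact: cF | exact: open_interior].
Qed.

Lemma open_Rset : open (Rset a b i x).
Proof.
apply: openI; first exact: open_T2.
apply: (@open_comp _ _ _ (Gamma_r a b)) => [p _ | ]; first exact: continuous_Psi.
by apply: openI; [exact: open_interior | apply: open_lt => y; [exact: cvg_snd | exact: cvg_fst]].
Qed.

Lemma open_Lset : open (Lset a b i x).
Proof.
apply: openI; first exact: open_T2.
apply: (@open_comp _ _ _ (Gamma_l a b)) => [p _ | ]; first exact: continuous_Psi.
by apply: openI; [exact: open_interior | apply: open_lt => y; [exact: cvg_fst | exact: cvg_snd]].
Qed.

Lemma Rset_Tset p : Rset a b i x p -> Tset a b c d (d - c) x p.2.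
Proof.
move=> [_ [Yint Y21]]; have [Y1 Y2] := interior_Gamma Yint.
rewrite /Tset /= -(u1_flow_c a b x vtx_neq) -(u2_flow_c a b x vtx_neq) (u2Bu1 vtx_neq) subr_gt0.
by have [u1Y _] := vtx_ratio_gt0 Y1; have [u2Y _] := vtx_ratio_gt0 Y2; do !split.
Qed.

Lemma Lset_Tset p : Lset a b i x p -> Tset a b c d (c - d) x p.2.
Proof.
move=> [_ [Yint Y12]]; have [Y1 Y2] := interior_Gamma Yint.
rewrite /Tset /= -(u1_flow_c a b x vtx_neq) -(u2_flow_c a b x vtx_neq).
rewrite -[c - d]opprB mulNr (u2Bu1 vtx_neq) oppr_gt0 subr_lt0.
by have [u1Y _] := vtx_ratio_gt0 Y1; have [u2Y _] := vtx_ratio_gt0 Y2; do !split.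
Qed.

End Vertices.

Theorem lemma6p1 (R : realType) (alpha beta : R) :
  0 < beta -> beta < alpha ->
  forall (x : R * R) (i : bool),
    interior (Gamma alpha beta) x ->
    diffeo_onto (Rset alpha beta i x) (fun st => Psi2 alpha beta i st.1 st.2 x) /\
    diffeo_onto (Lset alpha beta i x) (fun st => Psi2 alpha beta i st.1 st.2 x).
Proof.
move=> beta_gt0 beta_lt_alpha x i Ix.
have [x1 x2] := interior_Gamma Ix.
have [[_ w1_gt0] [_ w2_gt0]] := (vtx_ratio_gt0 i x1, vtx_ratio_gt0 i x2).
have dc := vtx_neq R i.
split.
  apply: (diffeo_onto_F (sg := vtx R (~~ i) - vtx R i)) => //.
  - by rewrite subr_eq0.
  - exact: open_Rset.
  - exact: Rset_Tset.
apply: (diffeo_onto_F (sg := vtx R i - vtx R (~~ i))) => //.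
- by rewrite subr_eq0 eq_sym.
- exact: open_Lset.
- exact: Lset_Tset.
Qed.
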